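(* Let $X=\{x_1,\dots,x_S\}\subset\mathbb{R}^A$ be finite and $K\ge1$. The reduced-space branch and bound algorithm for the $K$-center problem described in the context terminates after finitely many steps.
   Context: The $K$-center problem is $z=\min_{\mu^1,\dots,\mu^K\in X}\max_s\min_k\|x_s-\mu^k\|_2^2$. Root region: the box $M_0=M_0^1\times\cdots\times M_0^K$, $M_0^k=\{\mu^k:\min_s x_{s,a}\le\mu^k_a\le\max_s x_{s,a}\ \forall a\}$. Nodes are boxes $M=M^1\times\cdots\times M^K$. Lower bound $\beta(M)=\max_s\min_k\min_{\mu^k\in M^k}\|x_s-\mu^k\|_2^2$; upper bound $\alpha(M)$ is the objective value at a feasible $\hat\mu\in X\cap M$. Algorithm: maintain a list of nodes, initially $\{M_0\}$; repeatedly remove a node with least lower bound, tighten it (shrinking boxes without excluding optimal solutions, including replacing each $M^k$ by the smallest box containing $X\cap M^k$); if $|X\cap M^k|>1$ for some $k$, bisect at its midpoint the coordinate $\mu^k_a$ of largest range, keeping a child only if each of its $K$ boxes contains a sample; update the best lower bound $\beta_i$ (minimum of $\beta$ over the list) and best upper bound $\alpha_i$; delete nodes with $\beta(M')\ge\alpha_i$; stop if $\alpha_i-\beta_i\le\epsilon$ (tolerance $\epsilon\ge0$) or the list is empty. *)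

(* Model of the reduced-space branch-and-bound algorithm
   for the (discrete) K-center problem, as a nondeterministic transition
   system; "terminates" = every run reaches the stopping state. *)
From HB Require Import structures.
From mathcomp Require Import all_boot all_order all_algebra.
From mathcomp Require Import reals.

Set Implicit Arguments.
Unset Strict Implicit.
Unset Printing Implicit Defensive.

Import Order.TTheory GRing.Theory Num.Theory.
Local Open Scope ring_scope.

Section KCenterBB.

Variable R : realType.
Variables (S A K : nat).
Variable x : 'I_S -> 'I_A -> R.
Variable eps : R.

Definition minseq (s : seq R) : R :=
  if s is h :: t then foldr Num.min h t else 0.
Definition maxseq (s : seq R) : R :=
  if s is h :: t then foldr Num.max h t else 0.

Record box := Box { lo : 'I_A -> R; hi : 'I_A -> R }.
Definition node := 'I_K -> box.

Definition inbox (b : box) (y : 'I_A -> R) : bool :=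
  [forall a, (lo b a <= y a) && (y a <= hi b a)].

Definition sqdist (y z : 'I_A -> R) : R := \sum_(a < A) (y a - z a) ^+ 2.

(* min_{mu in b} ||y - mu||^2, attained at the coordinatewise projection
   (clamping) of y onto the box b *)
Definition clamp (b : box) (y : 'I_A -> R) : 'I_A -> R :=
  fun a => Num.min (hi b a) (Num.max (lo b a) (y a)).
Definition boxdist (b : box) (y : 'I_A -> R) : R := sqdist y (clamp b y).

Definition minK (f : 'I_K -> R) : R := minseq [seq f k | k <- enum 'I_K].
Definition maxS (f : 'I_S -> R) : R := maxseq [seq f s | s <- enum 'I_S].

Definition beta (M : node) : R := maxS (fun s => minK (fun k => boxdist (M k) (x s))).

(* a candidate solution: centers mu^k = x_(c k) in X *)
Definition obj (c : 'I_K -> 'I_S) : R :=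
  maxS (fun s => minK (fun k => sqdist (x s) (x (c k)))).
Definition optimal (c : 'I_K -> 'I_S) : Prop := forall c', obj c <= obj c'.
Definition feasible_in (M : node) (c : 'I_K -> 'I_S) : Prop :=
  forall k, inbox (M k) (x (c k)).

Definition M0 : node := fun _ =>
  Box (fun a => minseq [seq x s a | s <- enum 'I_S])
      (fun a => maxseq [seq x s a | s <- enum 'I_S]).

Definition hassample (b : box) : bool := [exists s, inbox b (x s)].
Definition has2 (b : box) : bool :=
  [exists s, exists t, [&& inbox b (x s), inbox b (x t) &
                            [exists a, x s a != x t a]]].

Definition bbox (b : box) : box :=
  Box (fun a => minseq [seq x s a | s <- enum 'I_S & inbox b (x s)])
      (fun a => maxseq [seq x s a | s <- enum 'I_S & inbox b (x s)]).

Definition subbox (b' b : box) : Prop :=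
  forall a, lo b a <= lo b' a /\ hi b' a <= hi b a.

Definition range (M : node) (k : 'I_K) (a : 'I_A) : R := hi (M k) a - lo (M k) a.

Definition midp (M : node) k a : R := (lo (M k) a + hi (M k) a) / 2.
Definition child_lo (M : node) k a : node := fun k' =>
  if k' == k then Box (lo (M k)) (fun a' => if a' == a then midp M k a else hi (M k) a')
  else M k'.
Definition child_hi (M : node) k a : node := fun k' =>
  if k' == k then Box (fun a' => if a' == a then midp M k a else lo (M k) a') (hi (M k))
  else M k'.
Definition children (M : node) k a : seq node :=
  [seq C <- [:: child_lo M k a; child_hi M k a] | [forall k', hassample (C k')]].

(* state: running with (node list, best upper bound alpha), or stopped *)
Inductive state := Run of seq node & R | Done.

Definition remove_nth (L : seq node) (i : nat) : seq node := take i L ++ drop i.+1 L.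

Definition finish (L' : seq node) (alpha' : R) : state :=
  if L' is [::] then Done else
  let betai := minseq [seq beta N | N <- L'] in
  let L'' := [seq N <- L' | beta N < alpha'] in
  if L'' is [::] then Done else
  if alpha' - betai <= eps then Done else Run L'' alpha'.

Definition step (st st' : state) : Prop :=
  match st with
  | Done => False
  | Run L alpha =>
    exists (i : nat) (Mdef : node),
      (i < size L)%N /\
      (forall j, (j < size L)%N -> beta (nth Mdef L i) <= beta (nth Mdef L j)) /\
      let M := nth Mdef L i in
      (* tightening: shrink boxes without excluding optimal solutions *)
      exists M'' : node,
        (forall k, subbox (M'' k) (M k)) /\
        (forall c, optimal c -> feasible_in M c -> feasible_in M'' c) /\
        exists (newnodes : seq node) (alpha' : R),
          ((~~ [forall k, hassample (M'' k)] /\ newnodes = [::] /\ alpha' = alpha)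
           \/
           ([forall k, hassample (M'' k)] /\
            let M' : node := fun k => bbox (M'' k) in
            (alpha' = alpha \/
             exists c, feasible_in M' c /\ alpha' = Num.min alpha (obj c)) /\
            (if [exists k, has2 (M' k)] then
               exists k a, (forall k' a', range M' k' a' <= range M' k a) /\
                           newnodes = children M' k a
             else newnodes = [::]))) /\
          st' = finish (remove_nth L i ++ newnodes) alpha'
  end.

Inductive terminates : state -> Prop :=
| term_done : terminates Done
| term_step st : (exists st', step st st') ->
                 (forall st', step st st' -> terminates st') -> terminates st.

End KCenterBB.

From HB Require Import structures.
From mathcomp Require Import all_boot all_order all_algebra.
From mathcomp Require Import reals.
From mathcomp Require Import lra.
Import Order.TTheory GRing.Theory Num.Theory.
Local Open Scope ring_scope.

Set Implicit Arguments.
Unset Strict Implicit.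
Unset Printing Implicit Defensive.

(** Measure a node by the number of pairs (k, s) such that the sample x_s
    lies in the box M^k.  Tightening never adds samples to a box, and after
    replacing each box by the bounding box of its samples, the extreme values
    of every coordinate are attained by samples.  When some box contains two
    distinct samples, the coordinate of largest range has positive range, so
    bisecting it at its midpoint cuts the sample attaining the upper (resp.
    lower) extreme value out of the lower (resp. upper) half: each child has
    strictly fewer samples than its parent.  Hence the weight of the node
    list, the sum of 3^(number of samples) over its nodes, strictly decreases
    at each iteration (two children of count < m weigh at most 2 * 3^(m-1)
    < 3^m, and deletions only lower the weight), while an iteration is
    always possible as long as the list is nonempty. *)

Section MinMaxSeq.
Variable R : realType.
Implicit Types (h y : R) (t : seq R).

Lemma minseq_le h t y : y \in h :: t -> minseq (h :: t) <= y.
Proof.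
rewrite /= foldrE inE => /predU1P[->|yt]; first exact: bigmin_le_id.
exact: ge_bigmin_seq.
Qed.

Lemma maxseq_ge h t y : y \in h :: t -> y <= maxseq (h :: t).
Proof.
rewrite /= foldrE inE => /predU1P[->|yt]; first exact: bigmax_ge_id.
exact: le_bigmax_seq.
Qed.

Lemma minseq_mem h t : minseq (h :: t) \in h :: t.
Proof.
rewrite /= foldrE big_seq; elim/big_ind: _ => [|u v|y yt]; rewrite ?mem_head //.
  by rewrite /Order.min; case: ifP.
by rewrite inE yt orbT.
Qed.

Lemma maxseq_mem h t : maxseq (h :: t) \in h :: t.
Proof.
rewrite /= foldrE big_seq; elim/big_ind: _ => [|u v|y yt]; rewrite ?mem_head //.
  by rewrite /Order.max; case: ifP.
by rewrite inE yt orbT.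
Qed.

End MinMaxSeq.

Section Boxes.
Variables (R : realType) (S A : nat) (x : 'I_S -> 'I_A -> R).
Implicit Types (b : box R A) (y : 'I_A -> R).

Lemma inboxP b y : reflect (forall a, lo b a <= y a <= hi b a) (inbox b y).
Proof. exact: forallP. Qed.

Lemma subbox_inbox b' b y : subbox b' b -> inbox b' y -> inbox b y.
Proof.
move=> sub /inboxP yb'; apply/inboxP => a.
have [lo_le hi_le] := sub a; have /andP[lo'y yhi'] := yb' a.
by rewrite (le_trans lo_le lo'y) (le_trans yhi' hi_le).
Qed.

Definition samples b : {set 'I_S} := [set s | inbox b (x s)].

Lemma subbox_samples b' b : subbox b' b -> samples b' \subset samples b.
Proof. by move=> sub; apply/subsetP => s; rewrite !inE; apply: subbox_inbox. Qed.

Lemma has2_range_pos b : has2 x b -> exists a, lo b a < hi b a.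
Proof.
case/existsP => s /existsP[t /and3P[/inboxP sb /inboxP tb /existsP[a neq]]].
exists a; have /andP[los shi] := sb a; have /andP[lot thi] := tb a.
by case: (ltgtP (x s a) (x t a)) neq => // ? _; lra.
Qed.

Section BoundingBox.
Variables (b : box R A) (a : 'I_A).

Let coords := [seq x s a | s <- enum 'I_S & inbox b (x s)].

Lemma coords_mem s : inbox b (x s) -> x s a \in coords.
Proof. by move=> sb; apply: map_f; rewrite mem_filter sb mem_enum. Qed.

Lemma coords_sample v : v \in coords -> exists2 s, inbox b (x s) & v = x s a.
Proof. by case/mapP => s; rewrite mem_filter => /andP[sb _] ->; exists s. Qed.

Lemma lo_bbox_le s : inbox b (x s) -> lo (bbox x b) a <= x s a.
Proof.
move/coords_mem; rewrite /= -/coords.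
by case: coords => [//|h t]; apply: minseq_le.
Qed.

Lemma hi_bbox_ge s : inbox b (x s) -> x s a <= hi (bbox x b) a.
Proof.
move/coords_mem; rewrite /= -/coords.
by case: coords => [//|h t]; apply: maxseq_ge.
Qed.

Lemma lo_bbox_attained : hassample x b ->
  exists2 s, inbox b (x s) & x s a = lo (bbox x b) a.
Proof.
case/existsP => s /coords_mem; rewrite /= -/coords.
case: coords (@coords_sample) => [//|h t] sample _.
by have [s' s'b ->] := sample _ (minseq_mem h t); exists s'.
Qed.

Lemma hi_bbox_attained : hassample x b ->
  exists2 s, inbox b (x s) & x s a = hi (bbox x b) a.
Proof.
case/existsP => s /coords_mem; rewrite /= -/coords.
case: coords (@coords_sample) => [//|h t] sample _.
by have [s' s'b ->] := sample _ (maxseq_mem h t); exists s'.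
Qed.

End BoundingBox.

Lemma inbox_bbox b s : inbox b (x s) -> inbox (bbox x b) (x s).
Proof. by move=> sb; apply/inboxP => a; rewrite lo_bbox_le ?hi_bbox_ge. Qed.

Lemma bbox_subbox b : hassample x b -> subbox (bbox x b) b.
Proof.
move=> hs a; have [s /inboxP sb <-] := lo_bbox_attained a hs.
have [t /inboxP tb <-] := hi_bbox_attained a hs.
by have /andP[-> _] := sb a; have /andP[_ ->] := tb a.
Qed.

Lemma samples_bbox b : hassample x b -> samples (bbox x b) = samples b.
Proof.
move=> hs; apply/eqP; rewrite eqEsubset (subbox_samples (bbox_subbox hs)) /=.
by apply/subsetP => s; rewrite !inE; apply: inbox_bbox.
Qed.

End Boxes.

Section NodeCount.
Variables (R : realType) (S A K : nat) (x : 'I_S -> 'I_A -> R).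
Implicit Types (b : box R A) (M C : node R A K).

Definition lower_half b a : box R A :=
  Box (lo b) (fun a' => if a' == a then (lo b a + hi b a) / 2 else hi b a').
Definition upper_half b a : box R A :=
  Box (fun a' => if a' == a then (lo b a + hi b a) / 2 else lo b a') (hi b).

Lemma lower_half_proper b a s : lo b a < hi b a -> inbox b (x s) ->
  x s a = hi b a -> samples x (lower_half b a) \proper samples x b.
Proof.
move=> lohi sb shi; apply/properP; split.
  apply: subbox_samples => a' /=; split=> //; case: eqP => [->|_] //; lra.
exists s; rewrite inE //; apply/negP => /inboxP/(_ a)/andP[_].
by rewrite /= eqxx shi; lra.
Qed.

Lemma upper_half_proper b a s : lo b a < hi b a -> inbox b (x s) ->
  x s a = lo b a -> samples x (upper_half b a) \proper samples x b.
Proof.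
move=> lohi sb slo; apply/properP; split.
  apply: subbox_samples => a' /=; split=> //; case: eqP => [->|_] //; lra.
exists s; rewrite inE //; apply/negP => /inboxP/(_ a)/andP[+ _].
by rewrite /= eqxx slo; lra.
Qed.

Definition sample_count M : nat := (\sum_(k < K) #|samples x (M k)|)%N.

Lemma sample_count_le C M :
  (forall k, samples x (C k) \subset samples x (M k)) ->
  (sample_count C <= sample_count M)%N.
Proof. by move=> sub; apply: leq_sum => k _; apply: subset_leq_card. Qed.

Lemma sample_count_lt C M k :
  (forall k', samples x (C k') \subset samples x (M k')) ->
  samples x (C k) \proper samples x (M k) ->
  (sample_count C < sample_count M)%N.
Proof.
move=> sub ltk; rewrite /sample_count (bigD1 k) // [X in (_ < X)%N](bigD1 k) //=.
rewrite -addSn; apply: leq_add; first exact: proper_card.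
by apply: leq_sum => k' _; apply: subset_leq_card.
Qed.

Lemma child_loE M k a k' :
  child_lo M k a k' = if k' == k then lower_half (M k) a else M k'.
Proof. by []. Qed.

Lemma child_hiE M k a k' :
  child_hi M k a k' = if k' == k then upper_half (M k) a else M k'.
Proof. by []. Qed.

Lemma sample_count_child_lo M k a s : lo (M k) a < hi (M k) a ->
  inbox (M k) (x s) -> x s a = hi (M k) a ->
  (sample_count (child_lo M k a) < sample_count M)%N.
Proof.
move=> lohi sb shi; have ltk := lower_half_proper lohi sb shi.
apply: (sample_count_lt (k := k)); last by rewrite child_loE eqxx.
by move=> k'; rewrite child_loE; case: eqP => [->|_] /=; rewrite ?(proper_sub ltk).
Qed.

Lemma sample_count_child_hi M k a s : lo (M k) a < hi (M k) a ->
  inbox (M k) (x s) -> x s a = lo (M k) a ->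
  (sample_count (child_hi M k a) < sample_count M)%N.
Proof.
move=> lohi sb slo; have ltk := upper_half_proper lohi sb slo.
apply: (sample_count_lt (k := k)); last by rewrite child_hiE eqxx.
by move=> k'; rewrite child_hiE; case: eqP => [->|_] /=; rewrite ?(proper_sub ltk).
Qed.

Lemma size_children M k a : (size (children x M k a) <= 2)%N.
Proof. by rewrite /children /=; do 2 case: ifP. Qed.

Lemma children_sample_count_lt M k a : lo (M k) a < hi (M k) a ->
  (exists2 s, inbox (M k) (x s) & x s a = hi (M k) a) ->
  (exists2 s, inbox (M k) (x s) & x s a = lo (M k) a) ->
  all (fun C => sample_count C < sample_count M)%N (children x M k a).
Proof.
move=> lohi [s sb shi] [t tb tlo].
have lt_lo := sample_count_child_lo lohi sb shi.
have lt_hi := sample_count_child_hi lohi tb tlo.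
by rewrite /children /=; do 2 case: ifP => _ /=; rewrite ?lt_lo ?lt_hi.
Qed.

Section Tightening.
Variable M'' : node R A K.
Hypothesis M''_samples : forall k, hassample x (M'' k).
Let M' : node R A K := fun k => bbox x (M'' k).

Lemma sample_count_tighten M : (forall k, subbox (M'' k) (M k)) ->
  (sample_count M' <= sample_count M)%N.
Proof.
move=> sub; apply: sample_count_le => k.
by rewrite samples_bbox //; apply: subbox_samples.
Qed.

Lemma children_tighten_sample_count_lt k a :
  [exists k, has2 x (M' k)] ->
  (forall k' a', range M' k' a' <= range M' k a) ->
  all (fun C => sample_count C < sample_count M')%N (children x M' k a).
Proof.
case/existsP => k0 /has2_range_pos[a0 pos0] amax.
apply: children_sample_count_lt.
- by have := amax k0 a0; rewrite /range; lra.
- have [s sb shi] := hi_bbox_attained a (M''_samples k).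
  by exists s; rewrite ?inbox_bbox.
- have [s sb slo] := lo_bbox_attained a (M''_samples k).
  by exists s; rewrite ?inbox_bbox.
Qed.

End Tightening.

Definition weight (L : seq (node R A K)) : nat := (\sum_(N <- L) 3 ^ sample_count N)%N.

Lemma weight_cat L1 L2 : weight (L1 ++ L2) = (weight L1 + weight L2)%N.
Proof. exact: big_cat. Qed.

Lemma weight_remove_nth L d i : (i < size L)%N ->
  weight L = (weight (remove_nth L i) + 3 ^ sample_count (nth d L i))%N.
Proof.
move=> iL; rewrite /remove_nth weight_cat -{1}(cat_take_drop i L) (drop_nth d iL).
by rewrite weight_cat /weight big_cons addnA [in RHS]addnAC.
Qed.

Lemma weight_filter (P : pred (node R A K)) L : (weight [seq N <- L | P N] <= weight L)%N.
Proof.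
rewrite /weight big_filter [X in (_ <= X)%N](bigID P) /=; exact: leq_addr.
Qed.

Lemma weight_le_size L m : all (fun N => sample_count N <= m)%N L ->
  (weight L <= size L * 3 ^ m)%N.
Proof.
elim: L => [|N L IH] /=; first by rewrite /weight big_nil.
case/andP => leN /IH leL; rewrite /weight big_cons mulSn.
by apply: leq_add leL; apply: leq_pexp2l.
Qed.

Lemma weight_lt_pow3 L n : (size L <= 2)%N ->
  all (fun N => sample_count N < n)%N L -> (weight L < 3 ^ n)%N.
Proof.
case: n => [|n] sizeL ltL; first by case: L sizeL ltL => //; rewrite /weight big_nil.
have leL : all (fun N => sample_count N <= n)%N L.
  by apply: sub_all ltL => N; rewrite ltnS.
apply: leq_ltn_trans (weight_le_size leL) _.
by rewrite expnS ltn_mul2r expn_gt0 /=; apply: leq_ltn_trans sizeL _.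
Qed.

End NodeCount.

Section Termination.
Variables (R : realType) (S A K : nat) (x : 'I_S -> 'I_A -> R) (eps : R).
Implicit Types (L : seq (node R A K)) (alpha : R).

Lemma finish_Run L alpha L' alpha' : finish x eps L alpha = Run L' alpha' ->
  L' <> [::] /\ (weight x L' <= weight x L)%N.
Proof.
rewrite /finish; case: L => [//|N L]; case E: [seq _ <- _ | _] => [//|N' L''].
by case: ifP => // _ [<- _]; split=> //; rewrite -E; apply: weight_filter.
Qed.

Lemma step_Run L alpha L' alpha' : step x eps (Run L alpha) (Run L' alpha') ->
  L' <> [::] /\ (weight x L' < weight x L)%N.
Proof.
case=> i [d [iL [_ [M'' [sub [_ [nn [alpha'' [branch /esym/finish_Run]]]]]]]]].
case=> L'_nonnil le_weight; split=> //; apply: leq_ltn_trans le_weight _.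
rewrite weight_cat (weight_remove_nth x d iL) ltn_add2l.
case: branch => [[_ [-> _]] | [/forallP M''_samples [_]]].
  by rewrite /weight big_nil expn_gt0.
case: ifP => [has2M' [k [a [amax ->]]] | _ ->]; last first.
  by rewrite /weight big_nil expn_gt0.
apply: weight_lt_pow3; first exact: size_children.
apply: sub_all (children_tighten_sample_count_lt M''_samples has2M' amax).
by move=> C /leq_trans; apply; apply: sample_count_tighten.
Qed.

Lemma exists_max_range (M : node R A K) (k0 : 'I_K) (a0 : 'I_A) :
  exists k a, forall k' a', range M k' a' <= range M k a.
Proof.
pose F (p : 'I_K * 'I_A) := range M p.1 p.2.
case: (@arg_maxP _ _ _ (k0, a0) predT F isT) => -[k a] _ amax.
by exists k, a => k' a'; apply: (amax (k', a')).
Qed.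

Lemma step_progress L alpha : L <> [::] -> exists st', step x eps (Run L alpha) st'.
Proof.
case: L => [//|N0 L0] _; set L := N0 :: L0.
pose F (i : 'I_(size L)) := beta x (nth N0 L i).
case: (@arg_minP _ _ _ ord0 predT F isT) => i _ imin.
set M := nth N0 L i; pose M' : node R A K := fun k => bbox x (M k).
have [nn branch] : exists nn, if [exists k, has2 x (M' k)] then
    exists k a, (forall k' a', range M' k' a' <= range M' k a) /\
                nn = children x M' k a
  else nn = [::].
  case: (boolP [exists k, has2 x (M' k)]) => [|_]; last by exists [::].
  case/existsP => k0 /has2_range_pos[a0 _].
  have [k [a amax]] := exists_max_range M' k0 a0.
  by exists (children x M' k a), k, a.
have [M_samples | M_nosample] := boolP [forall k, hassample x (M k)].
- exists (finish x eps (remove_nth L i ++ nn) alpha), i, N0.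
  split=> //; split; first by move=> j jL; apply: (imin (Ordinal jL)).
  exists M; split; first by move=> k a; rewrite !lexx.
  split=> //; exists nn, alpha; split=> //.
  by right; split=> //; split; first by left.
- exists (finish x eps (remove_nth L i ++ [::]) alpha), i, N0.
  split=> //; split; first by move=> j jL; apply: (imin (Ordinal jL)).
  exists M; split; first by move=> k a; rewrite !lexx.
  by split=> //; exists [::], alpha; split=> //; left.
Qed.

Lemma terminates_Run L alpha : L <> [::] -> terminates x eps (Run L alpha).
Proof.
have [n] := ubnP (weight x L); elim: n => // n IH in L alpha *.
move=> /ltnSE weightL L_nonnil; apply: term_step; first exact: step_progress.
case=> [L' alpha' /step_Run[L'_nonnil ltL] | _]; last exact: term_done.
exact: IH (leq_trans ltL weightL) L'_nonnil.
Qed.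

End Termination.

Theorem lemma4 (R : realType) (S A K : nat) (x : 'I_S -> 'I_A -> R) (eps : R)
    (c0 : 'I_K -> 'I_S) :
  (0 < S)%N -> (0 < K)%N -> 0 <= eps ->
  @terminates R S A K x eps (Run [:: @M0 R S A K x] (obj x c0)).
Proof.
by move=> _ _ _; apply: terminates_Run.
Qed.
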